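(* Let $K\ge1$, $f_0^-\equiv0$, and let $f_1^-,\dots,f_K^-:\mathcal{S}\times\mathcal{A}\to\mathbb{R}$ and $b_1,\dots,b_K:\mathcal{S}\times\mathcal{A}\to[0,\infty)$ satisfy, for all $k\in\{1,\dots,K\}$ and all $(s,a)$, $$f_k^-(s,a)\le(\mathcal{T}f_{k-1}^-)(s,a)\le f_k^-(s,a)+2b_k(s,a).$$ For each $k$ let $\pi_k$ be a deterministic greedy policy w.r.t. $f_k^-$, i.e. $\pi_k(s)\in\arg\max_a f_k^-(s,a)$. Then for every (stationary) policy $\pi_{\mathrm{cp}}$, $$J_K(\pi_{\mathrm{cp}})-J_K(\pi_{K:1})\le2\sum_{t=0}^{K-1}\gamma^t\,\mathbb{E}_{(s,a)\sim d_t^{\pi_{\mathrm{cp}}}}[b_{K-t}(s,a)].$$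
   Context: MDP $(\mathcal{S},\mathcal{A},P,R,\gamma,d_0)$ with finite $\mathcal{S},\mathcal{A}$, reward $R:\mathcal{S}\times\mathcal{A}\to[0,R_{\max}]$, $\gamma\in[0,1)$. The Bellman optimality operator is $(\mathcal{T}f)(s,a)=R(s,a)+\gamma\mathbb{E}_{s'\sim P(\cdot\mid s,a)}[\max_{a'}f(s',a')]$. The non-stationary policy $\pi_{K:1}$ generates $s_0\sim d_0$, $a_t\sim\pi_{K-t}(\cdot\mid s_t)$, $r_t=R(s_t,a_t)$, $s_{t+1}\sim P(\cdot\mid s_t,a_t)$ for $t=0,\dots,K-1$, and $J_K(\pi_{K:1})=\mathbb{E}[\sum_{t=0}^{K-1}\gamma^tr_t]$. For a stationary policy $\pi$, $J_K(\pi)$ is the same quantity with all $\pi_k=\pi$, and $d_t^\pi(s,a)=\Pr_\pi[s_t=s,a_t=a]$. *)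

From HB Require Import structures.
From mathcomp Require Import all_boot all_order all_algebra.
Set Implicit Arguments. Unset Strict Implicit. Unset Printing Implicit Defensive.
Import Order.TTheory GRing.Theory Num.Theory.
Local Open Scope ring_scope.

Section MDP.
Variables (R : realFieldType) (S A : finType).

Definition is_dist (T : finType) (p : T -> R) : Prop :=
  (forall x, 0 <= p x) /\ \sum_(x : T) p x = 1.

(* max_{a'} g a' over the nonempty finite action set (a0 : A is any action;
   the value does not depend on it) *)
Definition maxA (a0 : A) (g : A -> R) : R := \big[Num.max/g a0]_(a : A) g a.

Definition bellman (a0 : A) (r : S -> A -> R) (gamma : R) (P : S -> A -> S -> R)
  (f : S -> A -> R) (s : S) (a : A) : R :=
  r s a + gamma * \sum_(s' : S) P s a s' * maxA a0 (f s').

(* A (possibly non-stationary) stochastic policy: pol t s a = Pr[a_t = a | s_t = s]. *)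
Fixpoint state_dist (P : S -> A -> S -> R) (d0 : S -> R) (pol : nat -> S -> A -> R)
  (t : nat) : S -> R :=
  match t with
  | 0 => d0
  | t'.+1 => fun s' => \sum_(s : S) \sum_(a : A)
        state_dist P d0 pol t' s * pol t' s a * P s a s'
  end.

Definition sa_dist (P : S -> A -> S -> R) (d0 : S -> R) (pol : nat -> S -> A -> R) (t : nat) (s : S) (a : A) : R := state_dist P d0 pol t s * pol t s a.

Definition J (P : S -> A -> S -> R) (d0 : S -> R) (r : S -> A -> R) (gamma : R)
  (K : nat) (pol : nat -> S -> A -> R) : R :=
  \sum_(t < K) gamma ^+ t * \sum_(s : S) \sum_(a : A) sa_dist P d0 pol t s a * r s a.

Definition stationary (pi : S -> A -> R) : nat -> S -> A -> R := fun _ => pi.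

(* non-stationary deterministic policy pi_{K:1}: at time t play pi_{K-t} *)
Definition nonstat (K : nat) (pi : nat -> S -> A) : nat -> S -> A -> R :=
  fun t s a => if a == pi (K - t)%N s then 1 else 0.

End MDP.

(* Let [x_t] be [gamma^t] times the mean of [f_(K-t)] under the comparator's
   state-action distribution [d_t], and [y_t] be [gamma^t] times the mean of
   [max_a f_(K-t)(s,a)] under the state distribution of [pi_(K:1)].  The upper
   half of the sandwich gives [x_t - x_(t+1) >= gamma^t (E_(d_t) r - 2 E_(d_t) b_(K-t))],
   because a one-step lookahead of [f_(K-t-1)] under the comparator is bounded
   by its maximum over actions.  Greediness and the lower half give
   [y_t - y_(t+1) <= gamma^t E r] along [pi_(K:1)].  Telescoping both and using
   [f_0 = 0] together with [x_0 <= y_0] (both start from [d_0]) yields the bound. *)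
From Pilot Require Import Defs.
From mathcomp Require Import all_boot all_order all_algebra.
From mathcomp Require Import zify ring lra.
Set Implicit Arguments. Unset Strict Implicit. Unset Printing Implicit Defensive.
Import Order.TTheory GRing.Theory Num.Theory.
Local Open Scope ring_scope.

Lemma sumr_ord_telescope (V : zmodType) (x : nat -> V) (n : nat) :
  \sum_(t < n) (x t - x t.+1) = x 0%N - x n.
Proof.
rewrite -(big_mkord xpredT (fun t => x t - x t.+1)).
rewrite (telescope_sumr_eq (fun t => - x t)) //; first by rewrite opprK addrC.
by move=> t _; rewrite opprK addrC.
Qed.

Section MaxOverActions.
Variables (R : realFieldType) (A : finType) (a0 : A).

Lemma le_maxA (g : A -> R) a : g a <= Defs.maxA a0 g.
Proof. rewrite /Defs.maxA; exact: le_bigmax. Qed.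

Lemma maxA_le (g : A -> R) c : (forall a, g a <= c) -> Defs.maxA a0 g <= c.
Proof. by move=> gc; rewrite /Defs.maxA; apply/bigmax_leP. Qed.

Lemma expect_le_maxA (p g : A -> R) : is_dist p -> \sum_a p a * g a <= Defs.maxA a0 g.
Proof.
move=> [p_ge0 p_sum1].
apply: (@le_trans _ _ (\sum_a p a * Defs.maxA a0 g)).
  by apply: ler_sum => a _; apply: ler_wpM2l => //; apply: le_maxA.
by rewrite -mulr_suml p_sum1 mul1r.
Qed.

End MaxOverActions.

Section Occupancy.
Variables (R : realFieldType) (S A : finType) (P : S -> A -> S -> R) (d0 : S -> R).
Implicit Types (pol : nat -> S -> A -> R) (u : S -> R) (g h : S -> A -> R).

Definition state_mean pol t u : R := \sum_s state_dist P d0 pol t s * u s.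

Definition sa_mean pol t g : R := \sum_s \sum_a sa_dist P d0 pol t s a * g s a.

Lemma sa_meanE pol t g :
  sa_mean pol t g = state_mean pol t (fun s => \sum_a pol t s a * g s a).
Proof.
apply: eq_bigr => s _; rewrite mulr_sumr.
by apply: eq_bigr => a _; rewrite /sa_dist mulrA.
Qed.

Lemma sa_meanDZ pol t c g h :
  sa_mean pol t (fun s a => g s a + c * h s a) = sa_mean pol t g + c * sa_mean pol t h.
Proof.
rewrite /sa_mean mulr_sumr -big_split; apply: eq_bigr => s _.
rewrite mulr_sumr -big_split; apply: eq_bigr => a _ /=; ring.
Qed.

Lemma state_meanS pol t u :
  state_mean pol t.+1 u = sa_mean pol t (fun s a => \sum_s' P s a s' * u s').
Proof.
rewrite /state_mean /=.
under eq_bigr do rewrite mulr_suml.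
under eq_bigr do under eq_bigr do rewrite mulr_suml.
rewrite exchange_big; apply: eq_bigr => s _.
rewrite exchange_big; apply: eq_bigr => a _.
by rewrite mulr_sumr; apply: eq_bigr => s' _; rewrite /sa_dist !mulrA.
Qed.

Lemma sa_mean_bellman (a0 : A) (r : S -> A -> R) (gamma : R) pol t f :
  sa_mean pol t (bellman a0 r gamma P f)
  = sa_mean pol t r + gamma * state_mean pol t.+1 (fun s => Defs.maxA a0 (f s)).
Proof. by rewrite sa_meanDZ state_meanS. Qed.

Hypotheses (P_ge0 : forall s a s', 0 <= P s a s') (d0_ge0 : forall s, 0 <= d0 s).

Lemma state_dist_ge0 pol t s :
  (forall t s a, 0 <= pol t s a) -> 0 <= state_dist P d0 pol t s.
Proof.
move=> pol_ge0; elim: t s => [|t IH] s //=.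
by apply: sumr_ge0 => s' _; apply: sumr_ge0 => a _; rewrite !mulr_ge0.
Qed.

Lemma ler_state_mean pol t u v :
  (forall t s a, 0 <= pol t s a) -> (forall s, u s <= v s) ->
  state_mean pol t u <= state_mean pol t v.
Proof.
by move=> pol_ge0 uv; apply: ler_sum => s _; apply: ler_wpM2l => //; apply: state_dist_ge0.
Qed.

Lemma ler_sa_mean pol t g h :
  (forall t s a, 0 <= pol t s a) -> (forall s a, g s a <= h s a) ->
  sa_mean pol t g <= sa_mean pol t h.
Proof.
move=> pol_ge0 gh; apply: ler_sum => s _; apply: ler_sum => a _.
by apply: ler_wpM2l => //; apply: mulr_ge0; [apply: state_dist_ge0|].
Qed.

End Occupancy.

Lemma stationary_ge0 (R : realFieldType) (S A : finType) (pi : S -> A -> R) :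
  (forall s, is_dist (pi s)) -> forall t s a, 0 <= stationary pi t s a.
Proof. by move=> pi_dist t s a; case: (pi_dist s). Qed.

Lemma nonstat_ge0 (R : realFieldType) (S A : finType) K (pi : nat -> S -> A) :
  forall t s a, 0 <= @nonstat R S A K pi t s a.
Proof. by move=> t s a; rewrite /nonstat; case: eqP. Qed.

Lemma sa_mean_nonstat (R : realFieldType) (S A : finType) P d0 K pi t
    (g : S -> A -> R) :
  sa_mean P d0 (nonstat R K pi) t g
  = state_mean P d0 (nonstat R K pi) t (fun s => g s (pi (K - t)%N s)).
Proof.
rewrite sa_meanE; apply: eq_bigr => s _; congr (_ * _).
rewrite (bigD1 (pi (K - t)%N s)) //= /nonstat eqxx mul1r big1 ?addr0 //.
by move=> a /negbTE ->; rewrite mul0r.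
Qed.

Section SandwichedIterates.
Variables (R : realFieldType) (S A : finType) (a0 : A).
Variables (P : S -> A -> S -> R) (r : S -> A -> R) (gamma : R) (d0 : S -> R).
Hypotheses (P_dist : forall s a, is_dist (P s a)) (gamma_ge0 : 0 <= gamma).
Hypothesis d0_ge0 : forall s, 0 <= d0 s.
Variables (K : nat) (f b : nat -> S -> A -> R).
Hypothesis f_sandwich : forall k s a, (1 <= k <= K)%N ->
  f k s a <= bellman a0 r gamma P (f k.-1) s a <= f k s a + 2 * b k s a.

Let P_ge0 s a s' : 0 <= P s a s'. Proof. by case: (P_dist s a). Qed.

Lemma comparator_step (pi : S -> A -> R) t k :
  (forall s, is_dist (pi s)) -> (k < K)%N ->
  sa_mean P d0 (stationary pi) t r - 2 * sa_mean P d0 (stationary pi) t (b k.+1)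
  <= sa_mean P d0 (stationary pi) t (f k.+1)
     - gamma * sa_mean P d0 (stationary pi) t.+1 (f k).
Proof.
move=> pi_dist ltkK; have pi_ge0 := stationary_ge0 pi_dist.
have lookahead : sa_mean P d0 (stationary pi) t.+1 (f k)
    <= state_mean P d0 (stationary pi) t.+1 (fun s => Defs.maxA a0 (f k s)).
  rewrite sa_meanE; apply: ler_state_mean => // s.
  exact: expect_le_maxA.
have upper : sa_mean P d0 (stationary pi) t (bellman a0 r gamma P (f k))
    <= sa_mean P d0 (stationary pi) t (fun s a => f k.+1 s a + 2 * b k.+1 s a).
  apply: ler_sa_mean => // s a.
  have range : (1 <= k.+1 <= K)%N by lia.
  by case/andP: (@f_sandwich k.+1 s a range).
rewrite sa_mean_bellman sa_meanDZ in upper.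
have := ler_wpM2l gamma_ge0 lookahead; lra.
Qed.

Variables (pi : nat -> S -> A).
Hypothesis pi_greedy : forall k s a, (1 <= k <= K)%N -> f k s a <= f k s (pi k s).

Lemma greedy_step t : (t < K)%N ->
  state_mean P d0 (nonstat R K pi) t (fun s => Defs.maxA a0 (f (K - t)%N s))
  - gamma * state_mean P d0 (nonstat R K pi) t.+1 (fun s => Defs.maxA a0 (f (K - t.+1)%N s))
  <= sa_mean P d0 (nonstat R K pi) t r.
Proof.
move=> ltK; have ns_ge0 := @nonstat_ge0 R S A K pi.
suff : state_mean P d0 (nonstat R K pi) t (fun s => Defs.maxA a0 (f (K - t)%N s))
    <= sa_mean P d0 (nonstat R K pi) t (bellman a0 r gamma P (f (K - t.+1)%N)).
  by rewrite sa_mean_bellman lerBlDr.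
rewrite sa_mean_nonstat; apply: ler_state_mean => // s.
have -> : (K - t = (K - t.+1).+1)%N by lia.
set k := (K - t.+1).+1; have range : (1 <= k <= K)%N by rewrite /k; lia.
have [lower _] := andP (@f_sandwich k s (pi k s) range).
by apply: le_trans lower; apply: maxA_le => a; apply: pi_greedy.
Qed.

End SandwichedIterates.

Theorem mainTheorem13 (R : realFieldType) (S A : finType) (a0 : A)
  (P : S -> A -> S -> R) (r : S -> A -> R) (Rmax gamma : R) (d0 : S -> R)
  (HP : forall s a, is_dist (P s a))
  (Hr : forall s a, 0 <= r s a <= Rmax)
  (Hgamma : 0 <= gamma < 1)
  (Hd0 : is_dist d0)
  (K : nat) (HK : (1 <= K)%N)
  (f b : nat -> S -> A -> R)
  (Hf0 : forall s a, f 0%N s a = 0)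
  (Hb : forall k s a, (1 <= k <= K)%N -> 0 <= b k s a)
  (Hsand : forall k s a, (1 <= k <= K)%N ->
     f k s a <= bellman a0 r gamma P (f k.-1) s a <= f k s a + 2 * b k s a)
  (pi : nat -> S -> A)
  (Hgreedy : forall k s a, (1 <= k <= K)%N -> f k s a <= f k s (pi k s))
  (pi_cp : S -> A -> R) (Hcp : forall s, is_dist (pi_cp s)) :
  J P d0 r gamma K (stationary pi_cp) - J P d0 r gamma K (@nonstat R S A K pi)
  <= 2 * \sum_(t < K) gamma ^+ t *
        \sum_(s : S) \sum_(a : A) sa_dist P d0 (stationary pi_cp) t s a * b (K - t)%N s a.
Proof.
have [gamma_ge0 _] := andP Hgamma; have [d0_ge0 _] := Hd0.
have P_ge0 s a s' : 0 <= P s a s' by case: (HP s a).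
set cp := stationary pi_cp; set ns := nonstat R K pi.
set x := fun t => gamma ^+ t * sa_mean P d0 cp t (f (K - t)%N).
set y := fun t => gamma ^+ t * state_mean P d0 ns t (fun s => Defs.maxA a0 (f (K - t)%N s)).
have comparator : J P d0 r gamma K cp
    - 2 * \sum_(t < K) gamma ^+ t * sa_mean P d0 cp t (b (K - t)%N) <= x 0%N - x K.
  rewrite -sumr_ord_telescope /J mulr_sumr -sumrB; apply: ler_sum => -[t ltK] _.
  rewrite /x /= -/(sa_mean P d0 cp t r) mulrCA.
  rewrite exprSr -mulrA -!mulrBr ler_wpM2l ?exprn_ge0 //.
  have eK : (K - t = (K - t.+1).+1)%N by lia.
  by rewrite eK; apply: (comparator_step HP gamma_ge0 d0_ge0 Hsand); last lia.
have greedy : y 0%N - y K <= J P d0 r gamma K ns.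
  rewrite -sumr_ord_telescope; apply: ler_sum => -[t ltK] _.
  rewrite /y /= exprSr -mulrA -mulrBr ler_wpM2l ?exprn_ge0 //.
  exact: (greedy_step HP gamma_ge0 d0_ge0 Hsand Hgreedy).
have x_K : x K = 0.
  by rewrite /x subnn /sa_mean big1 ?mulr0 // => s _; rewrite big1 // => a _; rewrite Hf0 mulr0.
have y_K : y K <= 0.
  rewrite /y subnn; apply: mulr_ge0_le0; first exact: exprn_ge0.
  apply: sumr_le0 => s _; apply: mulr_ge0_le0.
    exact: (state_dist_ge0 P_ge0 d0_ge0 _ _ (nonstat_ge0 R K pi)).
  by apply: maxA_le => a; rewrite Hf0.
have x0_le_y0 : x 0%N <= y 0%N.
  rewrite /x /y !expr0 !mul1r subn0 sa_meanE.
  apply: (ler_state_mean P_ge0 d0_ge0 _ (stationary_ge0 Hcp)) => s.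
  exact: expect_le_maxA.
move: comparator; rewrite /sa_mean; lra.
Qed.
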